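(* Let $D_{a+}$ and $D_{a-}$ be knot diagrams that differ only at one crossing $a$, which is positive in $D_{a+}$ and negative in $D_{a-}$, and let $D^a$ be their common smoothing at $a$. Then $$H(D_{a+})-H(D_{a-})=-4\,lk(D^a).$$
   Context: A knot diagram is a generic oriented immersed circle in $S^2$ with over/under information at each crossing; crossing signs are given by the right-hand rule. For a crossing $a$, the smoothing $D^a$ is the two-component oriented link obtained by the orientation-preserving cut-and-paste at $a$, and $lk$ is the linking number of its components. Let $\mathbb{G}_{\mathbb{Z}}$ be the free abelian group on $\{X_n,Y_n\}_{n\in\mathbb{Z}}$, $I_{lk}(D)=\sum_{a\text{ positive}}X_{lk(D^a)}+\sum_{a\text{ negative}}Y_{lk(D^a)}$, $h:\mathbb{G}_{\mathbb{Z}}\to\mathbb{Z}$ the homomorphism with $h(X_n)=-n$, $h(Y_n)=n$, and $H(D)=h(I_{lk}(D))$ (minus the ''cowrithe''). *)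

(* Knot diagrams on S^2 are modelled combinatorially by
   signed Gauss diagrams that are realizable on S^2 (genus 0). *)
From HB Require Import structures.
From mathcomp Require Import all_boot all_order all_algebra.
Set Implicit Arguments. Unset Strict Implicit. Unset Printing Implicit Defensive.
Import Order.TTheory GRing.Theory Num.Theory.

(* A (signed, decorated) Gauss code with [m] passage points.
   Walking along the oriented knot, one meets the points 0, 1, ..., m-1
   (cyclically, m-1 is followed by 0).  Every crossing is passed twice:
   [gmate p] is the other passage through the crossing of passage [p],
   [gover p] says whether the passage [p] is the over-strand, and
   [gpos p] says whether the crossing of [p] is positive (right-hand rule). *)
Record gcode (m : nat) := GCode {
  gmate : 'I_m -> 'I_m ;
  gover : 'I_m -> bool ;
  gpos  : 'I_m -> bool }.

Definition gcode_wf m (D : gcode m) : Prop :=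
  forall p : 'I_m,
    [/\ gmate D (gmate D p) = p, gmate D p != p,
        gover D (gmate D p) = ~~ gover D p & gpos D (gmate D p) = gpos D p].

(* ---- The underlying 4-valent graph on the oriented sphere/surface ----
   Darts: (p, true) = outgoing half-edge at passage p (start of the edge
   from p to p+1), (p, false) = incoming half-edge at passage p (end of
   the edge from p-1 to p). *)
Definition dart m := ('I_m * bool)%type.

Definition dalpha m (d : dart m) : dart m :=
  if d.2 then (ordS d.1, false) else (ord_pred d.1, true).

(* counterclockwise rotation at a crossing with over passage o, under
   passage u:  positive: o_out -> u_out -> o_in -> u_in -> o_out
               negative: o_out -> u_in -> o_in -> u_out -> o_out *)
Definition dsigma m (D : gcode m) (d : dart m) : dart m :=
  let r := d.1 in
  if gover D r then (gmate D r, if gpos D r then d.2 else ~~ d.2)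
  else (gmate D r, if gpos D r then ~~ d.2 else d.2).

Definition dphi m (D : gcode m) (d : dart m) : dart m := dsigma D (dalpha d).

Definition nfaces m (D : gcode m) : nat := fcard (dphi D) (@predT (dart m)).

(* Realizable on S^2: Euler characteristic V - E + F = 2 with
   V = m/2 crossings and E = m edges (the crossingless diagram is planar). *)
Definition planar m (D : gcode m) : bool :=
  (m == 0%N) || (nfaces D == (m./2 + 2)%N).

Definition knot_diagram m (D : gcode m) : Prop := gcode_wf D /\ planar D.

(* [in_arc i j r]: r lies strictly after i and strictly before j, going
   forward along the knot from i. *)
Definition in_arc m (i j r : 'I_m) : bool :=
  let d (x : 'I_m) := ((x + m - i) %% m)%N in (0 < d r < d j)%N.

Definition sgnz m (D : gcode m) (q : 'I_m) : int := if gpos D q then 1%R else (-1)%R.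

(* The smoothing D^a at the crossing a of passage p has the two components
   "arc from p to gmate p" and "arc from gmate p to p"; its crossings are the
   crossings of D other than a, with the same signs.  A crossing (indexed by
   its over passage q) is between different components iff exactly one of its
   passages lies on the first arc.  lk = (sum of signs of such crossings)/2. *)
Definition mixed_sum m (D : gcode m) (p : 'I_m) : int :=
  (\sum_(q : 'I_m | [&& gover D q, q != p, q != gmate D p &
                      in_arc p (gmate D p) q != in_arc p (gmate D p) (gmate D q)])
     sgnz D q)%R.

Definition lk_smooth m (D : gcode m) (p : 'I_m) : int := (mixed_sum D p %/ 2)%Z.

Inductive gen := X of int | Y of int.

Definition h_gen (g : gen) : int := match g with X n => (- n)%R | Y n => n end.

(* I_lk(D), written as the formal sum (list of generators) gover the crossings
   of D, each crossing being indexed by its over passage. *)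
Definition I_lk m (D : gcode m) : seq gen :=
  [seq (if gpos D q then X (lk_smooth D q) else Y (lk_smooth D q))
  | q <- enum 'I_m & gover D q].

Definition h_sum (s : seq gen) : int := (\sum_(g <- s) h_gen g)%R.

Definition H m (D : gcode m) : int := h_sum (I_lk D).

(* H(D) is minus the sum, over the crossings q of D, of sign(q) * lk(D^q),
   where lk(D^q) is half the "mixed sum" of signs of the crossings whose two
   passages lie on different arcs cut out by q.  Changing the crossing a
   (passages p and [mate p]) affects this sum in two ways:
   - the term of a itself goes from +lk(D^a) to -lk(D^a), since D^a does not
     see the crossing information at a;
   - for every other crossing q, lk(D^q) drops by exactly one iff a is mixed
     for q, i.e. iff the chords of a and q in the Gauss diagram interlace,
     i.e. iff q is mixed for a; summed with signs this gives the mixed sum of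
     D^a, which is 2 lk(D^a).
   The only non-formal ingredient is that the mixed sum of D^a is even, so
   that lk(D^a) is exactly half of it.  This is where planarity enters: by
   Euler's formula every mod 2 cycle of the diagram is the boundary of a set
   of faces, and following the knot once around, the face function bounded
   by the arc from p to [mate p] changes exactly at the crossings of that arc
   with the rest of the knot. *)

From HB Require Import structures.
From mathcomp Require Import all_boot all_order all_algebra zify ring.
Import Order.TTheory GRing.Theory Num.Theory.

Set Implicit Arguments.
Unset Strict Implicit.
Unset Printing Implicit Defensive.

Definition cyc (a b c : nat) : bool :=
  [|| (a < b) && (b < c), (b < c) && (c < a) | (c < a) && (a < b)].

Lemma cyc_inter a b c d :
  a != b -> a != c -> a != d -> b != c -> b != d -> c != d ->
  (cyc c a d != cyc c b d) = (cyc a c b != cyc a d b).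
Proof. by rewrite /cyc; lia. Qed.

Section CyclicOrder.
Variable m : nat.

Definition fdist (x r : 'I_m) : nat := (r + m - x) %% m.

Lemma in_arcE x y z : in_arc x y z = (0 < fdist x z < fdist x y).
Proof. by []. Qed.

Lemma fdistE x r : fdist x r = if x <= r then r - x else r + m - x.
Proof.
have := ltn_ord r; have := ltn_ord x; rewrite /fdist.
case: (leqP x r) => xr hx hr; last by rewrite modn_small //; lia.
by rewrite (_ : r + m - x = (r - x) + m) ?modnDr ?modn_small //; lia.
Qed.

Lemma fdist_lt x r : fdist x r < m.
Proof. by rewrite fdistE; have := ltn_ord r; have := ltn_ord x; case: (leqP x r); lia. Qed.

Lemma fdistxx x : fdist x x = 0.
Proof. by rewrite fdistE leqnn subnn. Qed.

Lemma fdist_inj x : injective (fdist x).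
Proof.
move=> r s; rewrite !fdistE => E; apply/ord_inj; move: E.
by have := ltn_ord x; have := ltn_ord r; have := ltn_ord s; case: (leqP x r); case: (leqP x s); lia.
Qed.

Lemma fdist_pred x r :
  fdist x (ord_pred r) = if r == x then m.-1 else (fdist x r).-1.
Proof.
have hx := ltn_ord x; have hr := ltn_ord r.
have Epred : nat_of_ord (ord_pred r) = if nat_of_ord r == 0 then m.-1 else r.-1.
  rewrite /= ; case: eqP => [->|r0]; first by rewrite add0n modn_small //; lia.
  by rewrite (_ : (r + m).-1 = r.-1 + m) ?modnDr ?modn_small //; lia.
rewrite !fdistE Epred -(inj_eq (@ord_inj m)).
by repeat case: ifP; lia.
Qed.

Lemma in_arc_rev (x y z : 'I_m) : x != y -> y != z -> x != z ->
  in_arc y x z = ~~ in_arc x y z.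
Proof.
rewrite !in_arcE !fdistE -!(inj_eq (@ord_inj m)).
by have := ltn_ord x; have := ltn_ord y; have := ltn_ord z; repeat case: ifP; lia.
Qed.

Lemma in_arc_cyc (x y z : 'I_m) : x != y -> y != z -> x != z ->
  in_arc x y z = cyc x z y.
Proof.
rewrite in_arcE !fdistE -!(inj_eq (@ord_inj m)) /cyc.
by have := ltn_ord x; have := ltn_ord y; have := ltn_ord z; repeat case: ifP; lia.
Qed.

Lemma in_arc_inter (p u q w : 'I_m) :
  p != u -> p != q -> p != w -> u != q -> u != w -> q != w ->
  (in_arc q w p != in_arc q w u) = (in_arc p u q != in_arc p u w).
Proof.
move=> pu pq pw uq uw qw.
have qp : q != p by rewrite eq_sym.
have wp : w != p by rewrite eq_sym.
have qu : q != u by rewrite eq_sym.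
have wu : w != u by rewrite eq_sym.
by rewrite !in_arc_cyc //; apply: cyc_inter; rewrite (inj_eq (@ord_inj m)).
Qed.

Lemma ordS_invariant_const (f : 'I_m -> bool) :
  (forall r, f (ordS r) = f r) -> forall r s, f r = f s.
Proof.
move=> fS r s.
have fiter k x : f (iter k (@ordS m) x) = f x by elim: k => //= k IH; rewrite fS.
have val_iter k x : val (iter k (@ordS m) x) = (x + k) %% m.
  elim: k => [|k IH] /=; first by rewrite addn0 modn_small.
  by rewrite IH -addn1 modnDml addn1 addnS.
suff -> : r = iter (r + m - s) (@ordS m) s by rewrite fiter.
apply/val_inj; rewrite val_iter (_ : s + (r + m - s) = r + m) ?modnDr ?modn_small //.
by have := ltn_ord s; lia.
Qed.

End CyclicOrder.

Section SignedSums.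
Local Open Scope ring_scope.

Lemma sum_signs_parity (I : Type) (r : seq I) (P : pred I) (F : I -> int) :
  (forall i, F i = 1 \/ F i = -1) ->
  exists K : int, \sum_(i <- r | P i) F i =
                  K * 2 + (\big[addb/false]_(i <- r | P i) true : nat)%:Z.
Proof.
move=> Fsign; elim: r => [|a r [K IH]]; first by exists 0; rewrite !big_nil.
rewrite !big_cons; case: (P a); last by exists K.
rewrite IH; case: (Fsign a) => ->; case: (\big[addb/false]_(j <- r | P j) true).
- by exists (K + 1); rewrite /= addr0 mulrDl mul1r addrCA.
- by exists K; rewrite /= addr0 addrC.
- by exists K; rewrite /= addr0 addrCA addNr addr0.
- by exists (K - 1); rewrite /= addr0 mulrBl mul1r -addrA addrC.
Qed.

End SignedSums.

Section GaussCode.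
Variables (m : nat) (D : gcode m).
Hypothesis wf : gcode_wf D.
Local Notation mate := (gmate D).

Lemma mateK r : mate (mate r) = r. Proof. by case: (wf r). Qed.
Lemma mate_neq r : mate r != r. Proof. by case: (wf r). Qed.
Lemma over_mate r : gover D (mate r) = ~~ gover D r. Proof. by case: (wf r). Qed.
Lemma pos_mate r : gpos D (mate r) = gpos D r. Proof. by case: (wf r). Qed.
Lemma mate_inj : injective mate. Proof. exact: can_inj mateK. Qed.
Lemma mate_eq r s : (mate r == s) = (r == mate s).
Proof. by apply/eqP/eqP => [<-|->]; rewrite mateK. Qed.

End GaussCode.

Lemma dalphaK m : involutive (@dalpha m).
Proof. by case=> r [] /=; rewrite /dalpha /= ?ordSK ?ord_predK. Qed.

Section RibbonGraph.
Variables (m : nat) (D : gcode m).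
Hypothesis wf : gcode_wf D.
Local Notation mate := (gmate D).
Local Notation sg := (dsigma D).
Local Notation al := (@dalpha m).
Local Notation ph := (dphi D).

Lemma dsigma2 d : sg (sg d) = (d.1, ~~ d.2).
Proof.
case: d => r b; rewrite /dsigma /=.
by case Ho: (gover D r); case Hp: (gpos D r);
  rewrite /= (over_mate wf) (pos_mate wf) (mateK wf) Ho Hp /=; case: b.
Qed.

Lemma dsigma4 d : sg (sg (sg (sg d))) = d.
Proof. by rewrite !dsigma2 /= negbK; case: d. Qed.

Lemma dsigma_inj : injective sg.
Proof. exact: can_inj (fun x => sg (sg (sg x))) dsigma4. Qed.

Lemma dphi_inj : injective ph.
Proof. by move=> x y; rewrite /dphi => /dsigma_inj; apply: (inv_inj (@dalphaK m)). Qed.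

Lemma dphi_dalpha x : ph (al x) = sg x.
Proof. by rewrite /dphi dalphaK. Qed.

Lemma face_sym : connect_sym (frel ph).
Proof. exact: fconnect_sym dphi_inj. Qed.

Lemma froot_dphi x : froot ph (ph x) = froot ph x.
Proof. by apply/esym/(fingraph.rootP face_sym); apply: fconnect1. Qed.

(* The four darts at a crossing are the two darts of each of its passages;
   hence for any dart colouring, the sum around the crossing of x is the sum
   over the darts of the passages x.1 and [mate x.1]. *)
Lemma crossing_sum (c : dart m -> bool) x :
  c x (+) c (sg x) (+) c (sg (sg x)) (+) c (sg (sg (sg x))) =
  (c (x.1, false) (+) c (x.1, true)) (+) (c (mate x.1, false) (+) c (mate x.1, true)).
Proof.
case: x => r b; rewrite dsigma2 /=.
have sg_neg : sg (r, ~~ b) = ((sg (r, b)).1, ~~ (sg (r, b)).2).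
  by rewrite /dsigma /=; case: (gover D r); case: (gpos D r).
have sg_fst : sg (r, b) = (mate r, (sg (r, b)).2) by rewrite /dsigma /=; case: ifP.
rewrite sg_neg sg_fst /=; move: (sg (r, b)).2 => b'; clear sg_neg sg_fst.
case: b; case: b' => /=;
  by case: (c (r, true)); case: (c (r, false));
     case: (c (mate r, true)); case: (c (mate r, false)).
Qed.

(* The diagram is connected: a dart function constant along faces and around
   crossings is constant, since the knot runs through every edge. *)
Lemma face_crossing_invariant_const (k : dart m -> bool) :
  (forall x, k (ph x) = k x) -> (forall x, k (sg x) = k x) -> forall x y, k x = k y.
Proof.
move=> kph ksg.
have kal x : k (al x) = k x by rewrite -(ksg x) -dphi_dalpha kph.
have kout x : k x = k (x.1, true).
  case: x => r [] //=; by rewrite -(ksg (r, false)) -(ksg (sg (r, false))) dsigma2.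
have kS r : k (ordS r, true) = k (r, true).
  by rewrite -[(ordS r, true)](dsigma2 (al (r, true))) !ksg kal.
by move=> x y; rewrite kout (kout y) (ordS_invariant_const kS x.1 y.1).
Qed.

End RibbonGraph.

Section CycleSpace.
Variables (m : nat) (D : gcode m).
Hypothesis wf : gcode_wf D.
Local Notation mate := (gmate D).
Local Notation sg := (dsigma D).
Local Notation al := (@dalpha m).
Local Notation ph := (dphi D).

(* Mod 2 cycles of the diagram: dart colourings that are edge colourings
   (invariant under [dalpha]) meeting every crossing in an even number of
   darts. *)
Definition cycles : pred {ffun dart m -> bool} :=
  [pred c : {ffun dart m -> bool} | [forall x, c (al x) == c x] &&
     [forall x, c x (+) c (sg x) (+) c (sg (sg x)) (+) c (sg (sg (sg x))) == false]].

Lemma cycle_edge c : c \in cycles -> forall x, c (al x) = c x.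
Proof. by move=> /andP[/forallP c_al _] x; apply/eqP. Qed.

Lemma cycle_passage c : c \in cycles -> forall s,
  c (s, false) (+) c (s, true) = c (mate s, false) (+) c (mate s, true).
Proof.
move=> /andP[_ /forallP c_cr] s; move: (c_cr (s, true)).
rewrite (crossing_sum wf c (s, true)) /=.
move: (c (s, false) (+) c (s, true)) (c (mate s, false) (+) c (mate s, true)).
by do 2 case.
Qed.

(* Face sets are encoded by their indicator on face representatives; those
   not containing the face of d0 form the domain of the coboundary map. *)
Definition face_roots (d0 : dart m) : pred (dart m) :=
  [pred x | (froot ph x == x) && (x != froot ph d0)].

(* The coboundary of a set of faces: a dart is coloured iff exactly one of
   the two faces bordering its edge lies in the set. *)
Definition coboundary (h : {ffun dart m -> bool}) : {ffun dart m -> bool} :=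
  [ffun x => h (froot ph x) (+) h (froot ph (sg x))].

Lemma coboundary_cycle h : coboundary h \in cycles.
Proof.
apply/andP; split; apply/forallP => x; rewrite !ffunE.
  by rewrite -(froot_dphi wf (al x)) dphi_dalpha -/(dphi D x) froot_dphi // addbC.
rewrite (dsigma4 wf).
move: (h (froot ph x)) (h (froot ph (sg x))) (h (froot ph (sg (sg x))))
  (h (froot ph (sg (sg (sg x))))).
by do 4 case.
Qed.

(* Since the diagram is connected, only the empty and the full face sets have
   zero coboundary; hence the coboundary is injective on face sets avoiding
   a fixed face. *)
Lemma coboundary_inj d0 : {in pffun_on false (face_roots d0) predT &, injective coboundary}.
Proof.
move=> h1 h2 /pffun_onP[/supportP h1_0 _] /pffun_onP[/supportP h2_0 _] E.
pose k x := h1 (froot ph x) (+) h2 (froot ph x).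
have k_ph x : k (ph x) = k x by rewrite /k froot_dphi.
have k_sg x : k (sg x) = k x.
  have := congr1 (fun f : {ffun _ -> _} => f x) E; rewrite !ffunE /k.
  move: (h1 (froot ph x)) (h1 (froot ph (sg x))) (h2 (froot ph x)) (h2 (froot ph (sg x))).
  by do 4 case.
have k0 x : k x = false.
  rewrite (face_crossing_invariant_const wf k_ph k_sg x d0) /k h1_0 ?h2_0 //;
  by rewrite inE negb_and eqxx orbT.
apply/ffunP => y.
case Hy: (y \in face_roots d0); last by rewrite h1_0 ?h2_0 ?Hy.
move: Hy; rewrite inE => /andP[/eqP Ry _].
by move: (k0 y); rewrite /k Ry; case: (h1 y); case: (h2 y).
Qed.

Lemma card_face_sets d0 : #|pffun_on false (face_roots d0) predT| = 2 ^ (nfaces D).-1.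
Proof.
rewrite card_pffun_on card_bool; congr (_ ^ _).
rewrite /nfaces /n_comp_mem [in RHS](cardD1 (froot ph d0)).
rewrite inE /= (fingraph.roots_root (face_sym wf)) /=.
by apply: eq_card => x; rewrite !inE /= andbT andbC.
Qed.

(* A cycle is determined by its colour switches at the over passages together
   with its colour on the edge leaving one under passage b. *)
Definition cycle_code (b : 'I_m) (c : {ffun dart m -> bool}) : {ffun 'I_m -> bool} :=
  [ffun s => if gover D s then c (s, false) (+) c (s, true) else (s == b) && c (s, true)].

Lemma cycle_code_inj b : ~~ gover D b -> {in cycles &, injective (cycle_code b)}.
Proof.
move=> b_under c1 c2 c1W c2W E.
have E_at s := congr1 (fun f : {ffun _ -> _} => f s) E.
have switch s : c1 (s, false) (+) c1 (s, true) = c2 (s, false) (+) c2 (s, true).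
  have over_switch s' : gover D s' ->
      c1 (s', false) (+) c1 (s', true) = c2 (s', false) (+) c2 (s', true).
    by move=> s'_over; have := E_at s'; rewrite !ffunE s'_over.
  case s_over: (gover D s); first exact: over_switch.
  rewrite (cycle_passage c1W) (cycle_passage c2W).
  by apply: over_switch; rewrite (over_mate wf) s_over.
have c_in c : c \in cycles -> forall r, c (r, false) = c (ord_pred r, true).
  by move=> cW r; rewrite -[RHS](cycle_edge cW) /dalpha /= ord_predK.
pose e r := c1 (r, true) (+) c2 (r, true).
have eS r : e (ordS r) = e r.
  move: (switch (ordS r)); rewrite (c_in _ c1W) (c_in _ c2W) ordSK /e.
  move: (c1 (r, true)) (c2 (r, true)) (c1 (ordS r, true)) (c2 (ordS r, true)).
  by do 4 case.
have eb : e b = false.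
  by have := E_at b; rewrite !ffunE (negbTE b_under) eqxx /= /e => ->; rewrite addbb.
have c_out r : c1 (r, true) = c2 (r, true).
  move: (ordS_invariant_const eS r b); rewrite eb /e.
  by case: (c1 (r, true)); case: (c2 (r, true)).
apply/ffunP => [[r []]]; first exact: c_out.
by rewrite (c_in _ c1W) (c_in _ c2W) c_out.
Qed.

Lemma cycle_code_on b c : cycle_code b c \in pffun_on false [pred s | gover D s || (s == b)] predT.
Proof.
apply/pffun_onP; split => //; apply/supportP => s.
by rewrite inE negb_or ffunE => /andP[/negbTE -> /negbTE ->].
Qed.

Lemma card_over : #|[pred s | gover D s]| = m./2.
Proof.
set O := [set s | gover D s].
have pre_O : mate @^-1: O = ~: O by apply/setP => s; rewrite !inE (over_mate wf).
have card_CO : #|~: O| = #|O| by rewrite -pre_O card_preimset //; apply: mate_inj.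
have := cardsC O; rewrite card_CO card_ord addnn => card_O2.
have -> : m./2 = (#|O|.*2)./2 by rewrite card_O2.
rewrite doubleK.
by apply: eq_card => s; rewrite !inE.
Qed.

Lemma card_cycle_code_support b : ~~ gover D b ->
  #|[pred s | gover D s || (s == b)]| = m./2.+1.
Proof.
move=> b_under; rewrite (cardD1 b) inE eqxx orbT add1n -card_over.
congr _.+1; apply: eq_card => s; rewrite !inE.
by case: eqP => [->|] //=; rewrite ?(negbTE b_under) ?orbF.
Qed.

(* Euler's formula V - E + F = 2 means that there are as many face sets (up
   to complement) as cycles, so on a planar diagram every cycle is the
   coboundary of a set of faces. *)
Lemma planar_cycle_coboundary b : ~~ gover D b -> planar D -> forall c, c \in cycles ->
  exists g : dart m -> bool, (forall x, g (ph x) = g x) /\ (forall x, g x (+) g (sg x) = c x).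
Proof.
move=> b_under Dpl c cW.
have m_gt0 : 0 < m := leq_ltn_trans (leq0n b) (ltn_ord b).
set P := pffun_on false (face_roots (b, true)) predT.
have sub_cycles : coboundary @: P \subset cycles.
  by apply/subsetP => _ /imsetP[h _ ->]; apply: coboundary_cycle.
have card_im : #|coboundary @: P| = #|P| := card_in_imset (@coboundary_inj (b, true)).
have card_cycles : #|cycles| <= #|P|.
  have Euler : nfaces D = m./2 + 2.
    by move: Dpl; rewrite /planar eqn0Ngt m_gt0 /= => /eqP.
  rewrite card_face_sets Euler addn2 /= -(card_cycle_code_support b_under).
  rewrite -(card_in_imset (cycle_code_inj b_under)).
  have := card_pffun_on false [pred s | gover D s || (s == b)] (@predT bool).
  rewrite card_bool => <-; apply: subset_leq_card; apply/subsetP => _ /imsetP[c' _ ->].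
  exact: cycle_code_on.
have := geq_leqif (subset_leqif_card sub_cycles); rewrite card_im card_cycles.
move=> /esym/subsetP/(_ c cW)/imsetP[h _ ->].
exists (fun x => h (froot ph x)); split => x; first by rewrite froot_dphi.
by rewrite ffunE.
Qed.

End CycleSpace.

Section ArcCycle.
Variables (m : nat) (D : gcode m).
Hypothesis wf : gcode_wf D.
Local Notation mate := (gmate D).
Local Notation sg := (dsigma D).
Variable p : 'I_m.

(* Each one is counted once, through its over passage. *)
Definition mixed (q : 'I_m) : bool :=
  [&& gover D q, q != p, q != mate p & in_arc p (mate p) q != in_arc p (mate p) (mate q)].

Lemma mixed_sumE : mixed_sum D p = (\sum_(q | mixed q) sgnz D q)%R.
Proof. by []. Qed.

(* The arc from p to [mate p], as the set of darts of its edges. *)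
Definition arc_cycle : {ffun dart m -> bool} :=
  [ffun x => fdist p (if x.2 then x.1 else ord_pred x.1) < fdist p (mate p)].

Lemma fdist_mate_gt0 : 0 < fdist p (mate p).
Proof.
by rewrite lt0n; apply: contra (mate_neq wf p) => /eqP; rewrite -(fdistxx p) => /fdist_inj ->.
Qed.

Lemma arc_cycle_inner s b : s != p -> s != mate p -> arc_cycle (s, b) = in_arc p (mate p) s.
Proof.
move=> sp su; rewrite in_arcE ffunE.
have ds0 : fdist p s != 0 by apply: contra sp; rewrite -(fdistxx p) => /eqP /fdist_inj ->.
have dsu : fdist p s != fdist p (mate p) by apply: contra su => /eqP /fdist_inj ->.
by case: b; rewrite /= ?fdist_pred ?(negbTE sp); lia.
Qed.

Lemma arc_cycle_ends :
  [/\ arc_cycle (p, true), ~~ arc_cycle (p, false),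
      ~~ arc_cycle (mate p, true) & arc_cycle (mate p, false)].
Proof.
have := fdist_mate_gt0; have := fdist_lt p (mate p).
rewrite !ffunE /= fdistxx !fdist_pred eqxx (negbTE (mate_neq wf p)) ltnn.
by split; lia.
Qed.

Lemma arc_cycle_switch s :
  arc_cycle (s, false) (+) arc_cycle (s, true) = (s == p) || (s == mate p).
Proof.
have [pt pf ut uf] := arc_cycle_ends.
case: (eqVneq s p) => [->|sp]; first by rewrite (negbTE pf) pt.
case: (eqVneq s (mate p)) => [->|su]; first by rewrite uf (negbTE ut).
by rewrite !arc_cycle_inner // addbb.
Qed.

Lemma arc_cycle_is_cycle : arc_cycle \in cycles D.
Proof.
apply/andP; split; apply/forallP => x.
  by case: x => r [] /=; rewrite !ffunE /= ?ordSK.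
rewrite (crossing_sum wf arc_cycle x) !arc_cycle_switch !(mate_eq wf) (mateK wf).
by case: (x.1 == p); case: (x.1 == mate p).
Qed.

(* Colour of the dart obtained by rotating the incoming dart of s; it sits at
   the other passage [mate s] of the crossing, so for s off the crossing of p
   it records whether [mate s] lies on the arc. *)
Let arc_at_mate (s : 'I_m) : bool := arc_cycle (sg (s, false)).

(* Going once around the knot, the face function g with coboundary the arc
   changes exactly at the crossings of the arc with the rest of the knot;
   since g comes back to its initial value, their number is even. *)
Lemma arc_crossings_even : planar D -> \big[addb/false]_(s : 'I_m) arc_at_mate s = false.
Proof.
move=> Dpl; pose b := if gover D p then mate p else p.
have b_under : ~~ gover D b by rewrite /b; case: ifP => h; rewrite ?(over_mate wf) ?h.
have [g [g_ph g_cob]] := planar_cycle_coboundary wf b_under Dpl arc_cycle_is_cycle.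
pose G r := g (r, true).
have GS r : G (ordS r) = G r (+) arc_at_mate (ordS r).
  have g_pred : g (sg (ordS r, false)) = g (r, true).
    by rewrite -[sg (ordS r, false)]/(dphi D (r, true)) g_ph.
  have := g_cob (sg (ordS r, false)); rewrite (dsigma2 wf) /= g_pred /G /arc_at_mate => <-.
  by case: (g (r, true)); case: (g (ordS r, true)).
rewrite (reindex_inj (@ordS_inj m)) /=.
rewrite (eq_bigr (fun r => G (ordS r) (+) G r)); last first.
  by move=> r _; rewrite GS; case: (G r); case: (arc_at_mate (ordS r)).
have G_shift : \big[addb/false]_(r : 'I_m) G (ordS r) = \big[addb/false]_(r : 'I_m) G r.
  exact: esym (reindex_inj (@ordS_inj m)).
by rewrite big_split /= G_shift addbb.
Qed.

(* The number of mixed crossings is even: in the previous sum the two terms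
   at the crossing of p cancel, and pairing each under passage i with the
   over passage [mate i] leaves exactly the crossings whose passages lie on
   different arcs. *)
Lemma mixed_count_even : planar D -> \big[addb/false]_(q | mixed q) true = false.
Proof.
move=> Dpl; have := arc_crossings_even Dpl.
have up : mate p != p := mate_neq wf p.
rewrite (bigD1 p) // (bigD1 (mate p)) /= ?up //.
have ends_cancel : arc_at_mate p (+) arc_at_mate (mate p) = false.
  have [pt pf ut uf] := arc_cycle_ends.
  rewrite /arc_at_mate /dsigma /= (over_mate wf) (pos_mate wf) (mateK wf).
  by case: (gover D p); case: (gpos D p); rewrite /= ?pt ?(negbTE pf) ?(negbTE ut) ?uf.
rewrite addbA ends_cancel /=.
rewrite (eq_bigr (fun i => in_arc p (mate p) (mate i))); last first.
  move=> i /andP[ip iu]; rewrite /arc_at_mate.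
  have sg_fst : sg (i, false) = (mate i, (sg (i, false)).2) by rewrite /dsigma; case: ifP.
  by rewrite sg_fst arc_cycle_inner // (mate_eq wf) ?(mateK wf).
rewrite (bigID (fun i => gover D i)) /=.
have under_to_over :
    \big[addb/false]_(i | ((i != p) && (i != mate p)) && ~~ gover D i)
       in_arc p (mate p) (mate i) =
    \big[addb/false]_(i | ((i != p) && (i != mate p)) && gover D i) in_arc p (mate p) i.
  rewrite (reindex_inj (mate_inj wf)); apply: eq_big => i; last by rewrite (mateK wf).
  by rewrite /= !(mate_eq wf) (mateK wf) (over_mate wf) negbK [(i != mate p) && _]andbC.
rewrite under_to_over -big_split /= => even_sum; rewrite -[RHS]even_sum.
rewrite big_mkcond [RHS]big_mkcond; apply: eq_bigr => i _; rewrite /mixed.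
by case: (gover D i); case: (i != p); case: (i != mate p);
   case: (in_arc p (mate p) i); case: (in_arc p (mate p) (mate i)).
Qed.

Lemma mixed_sum_even : planar D -> mixed_sum D p = (lk_smooth D p * 2)%R.
Proof.
move=> Dpl.
have sgn_pm q : sgnz D q = 1%R \/ sgnz D q = (-1)%R by rewrite /sgnz; case: gpos; [left|right].
rewrite /lk_smooth mixed_sumE.
have [K ->] := sum_signs_parity (index_enum 'I_m) mixed sgn_pm.
by rewrite mixed_count_even // addr0 mulzK.
Qed.

End ArcCycle.

Section Smoothing.
Variables (m : nat) (D : gcode m).
Hypothesis wf : gcode_wf D.
Local Notation mate := (gmate D).
Local Open Scope ring_scope.

Lemma sgnz_mate q : sgnz D (mate q) = sgnz D q.
Proof. by rewrite /sgnz (pos_mate wf). Qed.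

(* The smoothing at a crossing does not depend on which of its two passages
   is used to name it: the two arcs are exchanged. *)
Lemma mixed_sum_mate p : mixed_sum D (mate p) = mixed_sum D p.
Proof.
rewrite !mixed_sumE; apply: eq_bigl => q; rewrite /mixed (mateK wf).
case: (eqVneq q p) => [->|qp]; first by rewrite ?eqxx /= ?andbF.
case: (eqVneq q (mate p)) => [->|qu]; first by rewrite ?eqxx /= ?andbF.
have pu : p != mate p by rewrite eq_sym (mate_neq wf).
have pq : p != q by rewrite eq_sym.
have uq : mate p != q by rewrite eq_sym.
have pq' : p != mate q by rewrite eq_sym (mate_eq wf).
have uq' : mate p != mate q by rewrite (inj_eq (mate_inj wf)).
rewrite /= !(in_arc_rev (x := p) (y := mate p)) //.
by case: (in_arc p (mate p) q); case: (in_arc p (mate p) (mate q)).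
Qed.

Lemma lk_smooth_mate p : lk_smooth D (mate p) = lk_smooth D p.
Proof. by rewrite /lk_smooth mixed_sum_mate. Qed.

Lemma crossing_term p (b : bool) :
  sgnz D (if b then p else mate p) * lk_smooth D (if b then p else mate p) =
  sgnz D p * lk_smooth D p.
Proof. by case: b; rewrite ?sgnz_mate ?lk_smooth_mate. Qed.

Lemma H_signed_sum : H D = - \sum_(q | gover D q) sgnz D q * lk_smooth D q.
Proof.
rewrite /H /h_sum /I_lk big_map big_filter big_enum_cond -sumrN.
apply: eq_big => [q|q _]; first by rewrite inE.
by rewrite /sgnz; case: (gpos D q); rewrite ?mul1r ?mulN1r ?opprK.
Qed.

Lemma sum_split_crossing (F : 'I_m -> int) p :
  \sum_q F q = F p + F (mate p) + \sum_(q | (q != p) && (q != mate p)) F q.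
Proof.
by rewrite (bigD1 p) //= (bigD1 (mate p)) ?(mate_neq wf) //= addrA.
Qed.

Lemma sum_over_split (F : 'I_m -> int) p :
  \sum_(q | gover D q) F q =
  F (if gover D p then p else mate p) +
  \sum_(q | (q != p) && (q != mate p)) (if gover D q then F q else 0).
Proof.
rewrite big_mkcond (sum_split_crossing _ p) (over_mate wf).
by case: (gover D p); rewrite /= ?addr0 ?add0r.
Qed.

(* Contribution of the crossing of p to the mixed sum of a smoothing at
   another crossing q: it is mixed iff the chords p-[mate p] and q-[mate q]
   of the Gauss diagram interlace. *)
Lemma mixed_sum_split p q : q != p -> q != mate p ->
  mixed_sum D q =
  (if in_arc p (mate p) q != in_arc p (mate p) (mate q) then sgnz D p else 0) +
  \sum_(r | (r != p) && (r != mate p)) (if mixed D q r then sgnz D r else 0).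
Proof.
move=> qp qu; rewrite mixed_sumE big_mkcond (sum_split_crossing _ p).
congr (_ + _); rewrite /mixed (mateK wf) (over_mate wf) sgnz_mate.
have pu : p != mate p by rewrite eq_sym (mate_neq wf).
have pq : p != q by rewrite eq_sym.
have uq : mate p != q by rewrite eq_sym.
have pq' : p != mate q by rewrite eq_sym (mate_eq wf).
have uq' : mate p != mate q by rewrite (inj_eq (mate_inj wf)) eq_sym.
have qq' : q != mate q by rewrite eq_sym (mate_neq wf).
rewrite pq pq' uq uq' /= [in_arc q (mate q) (mate p) == _]eq_sym in_arc_inter //.
by case: (gover D p); case: (_ != _); rewrite /= ?addr0 ?add0r.
Qed.

End Smoothing.

Section CrossingChange.
Local Open Scope ring_scope.
Variables (m : nat) (D1 D2 : gcode m) (p : 'I_m).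
Hypotheses (wf1 : gcode_wf D1) (wf2 : gcode_wf D2).
Hypothesis same_mate : forall q, gmate D2 q = gmate D1 q.
Hypothesis same_off : forall q, q != p -> q != gmate D1 p ->
  gover D2 q = gover D1 q /\ gpos D2 q = gpos D1 q.
Hypotheses (pos1 : gpos D1 p = true) (neg2 : gpos D2 p = false).
Local Notation u := (gmate D1 p).

Lemma mixed_sum_change_at : mixed_sum D2 p = mixed_sum D1 p.
Proof.
rewrite !mixed_sumE; apply: eq_big => q; rewrite /mixed !same_mate.
  case: (eqVneq q p) => [->|qp]; first by rewrite /= !andbF.
  case: (eqVneq q u) => [->|qu]; first by rewrite /= !andbF.
  by case: (same_off qp qu) => ->.
by move=> /and4P[_ qp qu _]; rewrite /sgnz; case: (same_off qp qu) => _ ->.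
Qed.

Lemma lk_change_at : lk_smooth D2 p = lk_smooth D1 p.
Proof. by rewrite /lk_smooth mixed_sum_change_at. Qed.

(* At another crossing q, the changed crossing contributes +1 to the mixed
   sum before the change and -1 after it, exactly when it is mixed. *)
Lemma lk_change_off q : q != p -> q != u ->
  lk_smooth D1 q - lk_smooth D2 q = (in_arc p u q != in_arc p u (gmate D1 q) : nat)%:Z.
Proof.
move=> qp qu; rewrite /lk_smooth (mixed_sum_split wf1 qp qu).
rewrite (mixed_sum_split wf2 (p := p)) ?same_mate //.
have -> : \sum_(r | (r != p) && (r != u)) (if mixed D2 q r then sgnz D2 r else 0) =
          \sum_(r | (r != p) && (r != u)) (if mixed D1 q r then sgnz D1 r else 0).
  apply: eq_bigr => r /andP[rp ru]; rewrite /mixed /sgnz !same_mate.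
  by case: (same_off rp ru) => -> ->.
rewrite /sgnz pos1 neg2; case: (_ != _) => /=; last by rewrite !add0r subrr.
set R := \sum_(r | _) _.
by rewrite (_ : 1 + R = 1 * 2 + (-1 + R)) ?divzMDl ?addrK // mul1r addrA.
Qed.

Lemma off_sum_change :
  \sum_(q | (q != p) && (q != u)) (if gover D1 q then sgnz D1 q * lk_smooth D1 q else 0) -
  \sum_(q | (q != p) && (q != u)) (if gover D2 q then sgnz D2 q * lk_smooth D2 q else 0) =
  mixed_sum D1 p.
Proof.
rewrite -sumrB mixed_sumE [RHS]big_mkcond [RHS](sum_split_crossing wf1 _ p).
rewrite /mixed !eqxx /= !andbF !add0r; apply: eq_bigr => q /andP[qp qu]; rewrite qp qu /=.
have [ov ps] := same_off qp qu; rewrite ov {2}/sgnz ps -/(sgnz D1 q).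
case: (gover D1 q); last by rewrite subrr.
rewrite -mulrBr lk_change_off //.
by case: (_ != _); rewrite ?mulr1 ?mulr0.
Qed.

End CrossingChange.

Local Open Scope ring_scope.

Theorem proposition1 (m : nat) (D1 D2 : gcode m) (p : 'I_m) :
  knot_diagram D1 -> knot_diagram D2 ->
  (forall q, gmate D2 q = gmate D1 q) ->
  (forall q, q != p -> q != gmate D1 p ->
     gover D2 q = gover D1 q /\ gpos D2 q = gpos D1 q) ->
  gover D2 p = ~~ gover D1 p ->
  gpos D1 p = true -> gpos D2 p = false ->
  H D1 - H D2 = - (4 * lk_smooth D1 p).
Proof.
move=> [wf1 planar1] [wf2 _] same_mate same_off _ pos1 neg2.
rewrite !H_signed_sum // (sum_over_split wf1 _ p) (sum_over_split wf2 _ p).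
have [sign1 sign2] : sgnz D1 p = 1 /\ sgnz D2 p = -1 by rewrite /sgnz pos1 neg2.
rewrite !crossing_term // same_mate (lk_change_at same_mate same_off) sign1 sign2.
have := off_sum_change wf1 wf2 same_mate same_off pos1 neg2.
rewrite (mixed_sum_even wf1 p planar1).
set S1 := \sum_(q | _) (if gover D1 q then _ else _).
set S2 := \sum_(q | _) (if gover D2 q then _ else _).
by move=> /eqP; rewrite subr_eq => /eqP ->; ring.
Qed.
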